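(* Let $n\geq3$ and let $\sigma:\mathbb{R}\to\mathbb{R}$ be an increasing odd homeomorphism. Let $x=(x_1,\dots,x_n)\in\mathbb{R}^n$ and suppose there exist $i<j$ in $\{1,\dots,n\}$ such that $x_ix_j<0$ and $(x_i,x_j)$ is $\sigma$-irrational in $\mathbb{R}^2$. Then the orbit $\mathcal M(\sigma,n)x=\{m(x):m\in\mathcal M(\sigma,n)\}$ is dense in $\mathbb{R}^n$.
   Context: For $1\leq i<j\leq n$ define $h_{i,j},v_{i,j}:\mathbb{R}^n\to\mathbb{R}^n$ by $h_{i,j}(x)=x+\sigma^{-1}(x_j)e_i$ and $v_{i,j}(x)=x+\sigma(x_i)e_j$ (only the $i$-th, resp. $j$-th, coordinate changes), where $(e_k)$ is the standard basis. $\mathcal M(\sigma,n)$ is the monoid generated by all $h_{i,j},v_{i,j}$, $1\le i<j\le n$. In $\mathbb{R}^2$, with $h_\sigma(x,y)=(x+\sigma^{-1}(y),y)$, $v_\sigma(x,y)=(x,\sigma(x)+y)$, the $\sigma$-rational lines are: the axes $Ox=\mathbb{R}\times\{0\}$, $Oy=\{0\}\times\mathbb{R}$; the sets $m(Ox)$ with $m$ in the monoid generated by $h_\sigma,v_\sigma$; and the sets $m(Oy)$ with $m$ in the monoid generated by $h_\sigma^{-1},v_\sigma^{-1}$. A point of $\mathbb{R}^2$ is $\sigma$-irrational if it lies on no $\sigma$-rational line. *)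

(* concrete reals R. Vectors of R^n are functions nat -> R,
   only coordinates 0..n-1 being relevant (indices are 0-based). *)
From Stdlib Require Import Reals Lra Arith.
Open Scope R_scope.

Inductive gen_monoid {T : Type} (G : (T -> T) -> Prop) : (T -> T) -> Prop :=
| gm_id : gen_monoid G (fun p => p)
| gm_comp : forall g m, G g -> gen_monoid G m -> gen_monoid G (fun p => g (m p)).

Definition incr_odd_homeo (sigma sigma_inv : R -> R) : Prop :=
  (forall a b, a < b -> sigma a < sigma b) /\
  (forall a, sigma (- a) = - sigma a) /\
  (forall a, continuity_pt sigma a) /\
  (forall a, continuity_pt sigma_inv a) /\
  (forall a, sigma (sigma_inv a) = a) /\
  (forall a, sigma_inv (sigma a) = a).

Definition hmap (sigma_inv : R -> R) (i j : nat) (x : nat -> R) : nat -> R :=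
  fun k => if Nat.eqb k i then x i + sigma_inv (x j) else x k.
Definition vmap (sigma : R -> R) (i j : nat) (x : nat -> R) : nat -> R :=
  fun k => if Nat.eqb k j then x j + sigma (x i) else x k.

Definition M_gen (sigma sigma_inv : R -> R) (n : nat) (f : (nat -> R) -> (nat -> R)) : Prop :=
  exists i j, (i < j < n)%nat /\ (f = hmap sigma_inv i j \/ f = vmap sigma i j).

Definition M_sigma (sigma sigma_inv : R -> R) (n : nat) := gen_monoid (M_gen sigma sigma_inv n).

Definition h2 (sigma_inv : R -> R) (p : R * R) : R * R := (fst p + sigma_inv (snd p), snd p).
Definition v2 (sigma : R -> R) (p : R * R) : R * R := (fst p, sigma (fst p) + snd p).
Definition h2inv (sigma_inv : R -> R) (p : R * R) : R * R := (fst p - sigma_inv (snd p), snd p).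
Definition v2inv (sigma : R -> R) (p : R * R) : R * R := (fst p, snd p - sigma (fst p)).

Definition Mplus (sigma sigma_inv : R -> R) :=
  gen_monoid (fun f => f = h2 sigma_inv \/ f = v2 sigma).
Definition Mminus (sigma sigma_inv : R -> R) :=
  gen_monoid (fun f => f = h2inv sigma_inv \/ f = v2inv sigma).

Definition Ox : R * R -> Prop := fun p => snd p = 0.
Definition Oy : R * R -> Prop := fun p => fst p = 0.

Definition image2 (m : R * R -> R * R) (A : R * R -> Prop) : R * R -> Prop :=
  fun q => exists p, A p /\ m p = q.

Definition sigma_rational_line (sigma sigma_inv : R -> R) (L : R * R -> Prop) : Prop :=
  L = Ox \/ L = Oy \/
  (exists m, Mplus sigma sigma_inv m /\ L = image2 m Ox) \/
  (exists m, Mminus sigma sigma_inv m /\ L = image2 m Oy).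

Definition sigma_irrational (sigma sigma_inv : R -> R) (p : R * R) : Prop :=
  ~ exists L, sigma_rational_line sigma sigma_inv L /\ L p.

Definition orbit_dense (sigma sigma_inv : R -> R) (n : nat) (x : nat -> R) : Prop :=
  forall (y : nat -> R) (eps : R), 0 < eps ->
    exists m, M_sigma sigma sigma_inv n m /\
      forall k, (k < n)%nat -> Rabs (m x k - y k) < eps.

(** Every generator adds [F (x_q)] to one coordinate [x_p], where [F] is
    [sigma] or [sigma^-1], an odd increasing homeomorphism.

    On the pair [(x_i, x_j)], alternating [h_{i,j}] and [v_{i,j}] is a
    subtractive Euclidean algorithm: the absolute values decrease and the
    signs stay opposite. Irrationality guarantees that no coordinate ever
    becomes [0], since the pair would then lie on a line [m(Oy)] with [m]
    in [M^-]. So both coordinates can be made as small as we like while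
    keeping opposite signs.

    Two small coordinates of opposite signs act as fine tools: adding [F] of
    one or the other moves any other coordinate in either direction by steps
    as small as we like, so those coordinates can be placed near any target.
    A third index [k] is then used to place the tool coordinate [u] as well,
    while the tool coordinate [t] stays near [0]. Finally every [y] is
    approximated by [W z] with [W] in the monoid and [z_t = 0] for some
    [t] in [{i, j}], and continuity of [W] concludes. *)
From Stdlib Require Import Reals Lra Lia ZArith Classical.
Open Scope R_scope.

Lemma continuity_pt_eps f x : continuity_pt f x -> forall eps, 0 < eps ->
  exists d, 0 < d /\ forall y, Rabs (y - x) < d -> Rabs (f y - f x) < eps.
Proof.
intros Hc eps He.
destruct (Hc eps He) as [d [Hd Hf]].
exists d; split; [exact Hd|]. intros y Hy.
destruct (Req_dec y x) as [->|Hne].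
- rewrite Rminus_diag, Rabs_R0; exact He.
- apply Hf. repeat split; auto.
Qed.

Lemma gen_monoid_comp {T} (G : (T -> T) -> Prop) m1 m2 :
  gen_monoid G m1 -> gen_monoid G m2 -> gen_monoid G (fun p => m2 (m1 p)).
Proof.
intros H1 H2; induction H2 as [|g m Hg _ IH].
- exact H1.
- exact (gm_comp G g (fun p => m (m1 p)) Hg IH).
Qed.

Lemma nat_floor r : 0 <= r -> exists N : nat, INR N <= r < INR N + 1.
Proof.
intros Hr. destruct (archimed r) as [H1 H2].
assert (Hz : (0 < up r)%Z) by (apply lt_IZR; lra).
exists (Z.to_nat (up r - 1)).
rewrite INR_IZR_INZ, Z2Nat.id, minus_IZR by lia. simpl. lra.
Qed.

Lemma nat_mul_unbounded a b : 0 < b -> exists N : nat, a < INR N * b.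
Proof.
intros Hb. destruct (INR_unbounded (a / b)) as [N HN]. exists N.
replace a with (a / b * b) by (field; lra).
apply Rmult_lt_compat_r; lra.
Qed.

(* With [m] large, [r] is the integer part of [(m al - y) / (- f)], which is
   positive because [al] and [f] have opposite signs; the error of [v] is at
   most [|f| / m]. *)
Lemma nat_combination_near al f y dl : al * f < 0 -> 0 < dl ->
  exists (m r : nat) v, Rabs (v - al) < dl /\ INR m * v + INR r * f = y.
Proof.
intros Hf Hdl.
assert (Hal : 0 < Rabs al) by (apply Rabs_pos_lt; intro E; rewrite E in Hf; lra).
assert (Hfnz : f <> 0) by (intro E; rewrite E in Hf; lra).
assert (Hf0 : 0 < Rabs f) by (apply Rabs_pos_lt, Hfnz).
assert (Hprod : - (al * f) = Rabs al * Rabs f)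
  by (rewrite <- Rabs_mult, Rabs_left; lra).
destruct (nat_mul_unbounded (Rabs f + Rabs y) (Rmin dl (Rabs al))) as [m Hm];
  [apply Rmin_glb_lt; lra|].
pose proof (Rmin_l dl (Rabs al)). pose proof (Rmin_r dl (Rabs al)).
pose proof (pos_INR m). pose proof (Rabs_pos y).
assert (Hmdl : Rabs f < INR m * dl) by nra.
assert (Hmal : Rabs y < INR m * Rabs al) by nra.
assert (Hm0 : 0 < INR m) by nra.
set (T := (INR m * al - y) / - f).
assert (HT : 0 < T).
{ unfold T. replace ((INR m * al - y) / - f) with ((INR m * - (al * f) + y * f) / (f * f))
    by (field; exact Hfnz).
  apply Rdiv_lt_0_compat; [|nra].
  assert (- (y * f) <= Rabs y * Rabs f) by (rewrite <- Rabs_mult; rewrite <- Rabs_Ropp; apply Rle_abs).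
  rewrite Hprod. nra. }
destruct (nat_floor T (Rlt_le _ _ HT)) as [r Hr].
exists m, r, ((y - INR r * f) / INR m). split; [|field; lra].
replace ((y - INR r * f) / INR m - al) with (f * (T - INR r) / INR m) by (unfold T; field; lra).
assert (Hinv : 0 < / INR m) by (apply Rinv_0_lt_compat, Hm0).
unfold Rdiv. rewrite !Rabs_mult, (Rabs_right (T - INR r)), (Rabs_right (/ INR m)) by lra.
apply (Rmult_lt_reg_r (INR m)); [exact Hm0|].
rewrite Rmult_assoc, Rinv_l by lra. nra.
Qed.

Lemma descent {T} (P Q : T -> Prop) (phi : T -> R) c : 0 < c ->
  (forall s, P s -> 0 <= phi s) ->
  (forall s, P s -> ~ Q s -> exists s', P s' /\ phi s' <= phi s - c) ->
  forall s, P s -> exists s', P s' /\ Q s'.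
Proof.
intros Hc Hnn Hstep.
assert (Hind : forall (N : nat) s, P s -> phi s <= INR N * c -> exists s', P s' /\ Q s').
{ induction N as [|N IH]; intros s Ps Hphi;
    (destruct (classic (Q s)) as [Qs|NQs]; [now exists s|]);
    destruct (Hstep s Ps NQs) as [s' [Ps' Hs']].
  - specialize (Hnn s' Ps'). simpl in Hphi. lra.
  - apply (IH s' Ps'). rewrite S_INR in Hphi. lra. }
intros s Ps. destruct (nat_mul_unbounded (phi s) c Hc) as [N HN].
apply (Hind N s Ps). lra.
Qed.

Lemma Rabs_add_opp_sign a b c : a * b < 0 -> 0 <= c * b -> Rabs c <= Rabs a ->
  Rabs (a + c) = Rabs a - Rabs c /\ (a + c) * b <= 0.
Proof.
intros Hab Hcb Hca.
destruct (Rlt_or_le 0 b) as [Hb|Hb].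
- assert (a < 0) by nra. assert (0 <= c) by nra.
  rewrite (Rabs_left a), (Rabs_right c) in * by lra.
  rewrite Rabs_left1 by lra. split; nra.
- assert (b < 0) by (destruct Hb; [auto|subst; nra]).
  assert (0 < a) by nra. assert (c <= 0) by nra.
  rewrite (Rabs_right a), (Rabs_left1 c) in * by lra.
  rewrite Rabs_right by lra. split; nra.
Qed.

Lemma far_point a b q d : q <> 0 ->
  exists c, forall z, Rabs (z - c) < d -> 0 <= (a - z) * q /\ 0 <= (b - z) * q.
Proof.
intros Hq. destruct (Rlt_or_le q 0) as [Hneg|Hpos].
- exists (Rmax a b + d). intros z Hz. apply Rabs_def2 in Hz.
  pose proof (Rmax_l a b). pose proof (Rmax_r a b). split; nra.
- exists (Rmin a b - d). intros z Hz. apply Rabs_def2 in Hz.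
  pose proof (Rmin_l a b). pose proof (Rmin_r a b). split; nra.
Qed.

Definition odd_incr_cont (f : R -> R) : Prop :=
  (forall a b, a < b -> f a < f b) /\ (forall a, f (- a) = - f a) /\
  (forall a, continuity_pt f a).

Section OddIncreasing.
Variable f : R -> R.
Hypothesis Hf : odd_incr_cont f.

Lemma oic_lt a b : a < b -> f a < f b.
Proof. apply Hf. Qed.

Lemma oic_le a b : a <= b -> f a <= f b.
Proof. intros [H|<-]; [left; apply oic_lt, H | apply Rle_refl]. Qed.

Lemma oic_opp a : f (- a) = - f a.
Proof. apply Hf. Qed.

Lemma oic_cont a : continuity_pt f a.
Proof. apply Hf. Qed.

Lemma oic_pos a : 0 < a -> 0 < f a.
Proof.
intros Ha. assert (H0 : f 0 = 0) by (pose proof (oic_opp 0) as E; rewrite Ropp_0 in E; lra).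
rewrite <- H0. apply oic_lt, Ha.
Qed.

Lemma oic_Rabs a : Rabs (f a) = f (Rabs a).
Proof.
destruct (Rle_or_lt 0 a) as [[Ha|<-]|Ha].
- rewrite !Rabs_right; [reflexivity | lra | left; apply oic_pos, Ha].
- rewrite Rabs_R0. pose proof (oic_opp 0) as E. rewrite Ropp_0 in E.
  replace (f 0) with 0 by lra. apply Rabs_R0.
- rewrite (Rabs_left a Ha), oic_opp. apply Rabs_left.
  pose proof (oic_pos (- a)) as Hp. rewrite oic_opp in Hp. lra.
Qed.

Lemma oic_mul_pos a : a <> 0 -> 0 < f a * a.
Proof.
intros Ha. destruct (Rlt_or_le 0 a) as [Hp|Hn].
- pose proof (oic_pos a Hp). nra.
- pose proof (oic_pos (- a)) as Hp. rewrite oic_opp in Hp. nra.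
Qed.

Lemma oic_mul_sign a b q : 0 <= (a - b) * q -> 0 <= (f a - f b) * q.
Proof.
intros H. destruct (Rtotal_order q 0) as [Hq|[->|Hq]].
- assert (f a <= f b) by (apply oic_le; nra). nra.
- lra.
- assert (f b <= f a) by (apply oic_le; nra). nra.
Qed.

End OddIncreasing.

Section Orbit.
Variables (sg si : R -> R) (n : nat).
Hypothesis Hs : incr_odd_homeo sg si.

Local Notation MS := (M_sigma sg si n).

Lemma sg_si a : sg (si a) = a.
Proof. apply Hs. Qed.

Lemma si_sg a : si (sg a) = a.
Proof. apply Hs. Qed.

Lemma oic_sg : odd_incr_cont sg.
Proof. destruct Hs as [A [B [C _]]]. repeat split; auto. Qed.

Lemma oic_si : odd_incr_cont si.
Proof.
destruct Hs as [_ [Hodd [_ [Hcont _]]]]. repeat split; auto.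
- intros a b Hab. destruct (Rlt_or_le (si a) (si b)) as [Hlt|Hge]; [exact Hlt|].
  apply (oic_le sg oic_sg) in Hge. rewrite !sg_si in Hge. lra.
- intros a. rewrite <- (si_sg (- si a)), Hodd, sg_si. reflexivity.
Qed.

Definition shear_fn (p q : nat) : R -> R := if Nat.ltb p q then si else sg.

Definition shear (p q : nat) : (nat -> R) -> (nat -> R) :=
  if Nat.ltb p q then hmap si p q else vmap sg q p.

Definition shear_iter (p q m : nat) : (nat -> R) -> (nat -> R) := Nat.iter m (shear p q).

Lemma oic_shear_fn p q : odd_incr_cont (shear_fn p q).
Proof. unfold shear_fn; destruct (Nat.ltb p q); [apply oic_si | apply oic_sg]. Qed.

Lemma shear_fn_inv p q a : p <> q -> shear_fn p q (shear_fn q p a) = a.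
Proof.
intros H. unfold shear_fn.
destruct (Nat.ltb_spec p q), (Nat.ltb_spec q p); try lia.
- apply si_sg.
- apply sg_si.
Qed.

Lemma shear_at p q s : shear p q s p = s p + shear_fn p q (s q).
Proof.
unfold shear, shear_fn, hmap, vmap.
destruct (Nat.ltb p q); rewrite Nat.eqb_refl; reflexivity.
Qed.

Lemma shear_other p q s k : k <> p -> shear p q s k = s k.
Proof.
intros H. apply Nat.eqb_neq in H.
unfold shear, hmap, vmap. destruct (Nat.ltb p q); rewrite H; reflexivity.
Qed.

Lemma shear_iter_other p q m s k : k <> p -> shear_iter p q m s k = s k.
Proof.
intros H. induction m as [|m IH]; [reflexivity|].
change (shear_iter p q (S m) s) with (shear p q (shear_iter p q m s)).
rewrite shear_other by exact H. exact IH.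
Qed.

Lemma shear_iter_at p q m s : p <> q ->
  shear_iter p q m s p = s p + INR m * shear_fn p q (s q).
Proof.
intros H. induction m as [|m IH]; [simpl; ring|].
change (shear_iter p q (S m) s) with (shear p q (shear_iter p q m s)).
rewrite shear_at, IH, (shear_iter_other p q m s q) by auto. rewrite S_INR. ring.
Qed.

Lemma M_gen_shear p q : p <> q -> (p < n)%nat -> (q < n)%nat -> M_gen sg si n (shear p q).
Proof.
intros H1 H2 H3. unfold shear. destruct (Nat.ltb_spec p q).
- exists p, q. split; [lia | now left].
- exists q, p. split; [lia | now right].
Qed.

Lemma M_gen_is_shear g : M_gen sg si n g ->
  exists p q, p <> q /\ (p < n)%nat /\ (q < n)%nat /\ g = shear p q.
Proof.
intros [i [j [Hij [-> | ->]]]].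
- exists i, j. repeat split; try lia.
  unfold shear. destruct (Nat.ltb_spec i j); [reflexivity | lia].
- exists j, i. repeat split; try lia.
  unfold shear. destruct (Nat.ltb_spec j i); [lia | reflexivity].
Qed.

Lemma MS_shear_iter p q m : p <> q -> (p < n)%nat -> (q < n)%nat -> MS (shear_iter p q m).
Proof.
intros Hpq Hp Hq. induction m as [|m IH]; [constructor|].
apply (gm_comp _ (shear p q) (shear_iter p q m)); [apply M_gen_shear|]; auto.
Qed.

Definition reach (u w : nat -> R) : Prop := exists m, MS m /\ m u = w.

Lemma reach_refl u : reach u u.
Proof. exists (fun p => p). split; [constructor | reflexivity]. Qed.

Lemma reach_trans u v w : reach u v -> reach v w -> reach u w.
Proof.
intros [m1 [H1 <-]] [m2 [H2 <-]].
exists (fun p => m2 (m1 p)). split; [apply gen_monoid_comp|]; auto.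
Qed.

Lemma reach_MS m u : MS m -> reach u (m u).
Proof. intros Hm; exists m; auto. Qed.

Lemma reach_shear_iter p q m u : p <> q -> (p < n)%nat -> (q < n)%nat ->
  reach u (shear_iter p q m u).
Proof. intros; apply reach_MS, MS_shear_iter; auto. Qed.

Lemma reach_shear p q u : p <> q -> (p < n)%nat -> (q < n)%nat -> reach u (shear p q u).
Proof. intros Hpq Hp Hq. exact (reach_shear_iter p q 1 u Hpq Hp Hq). Qed.

Definition close (d : R) (u w : nat -> R) : Prop :=
  forall k, (k < n)%nat -> Rabs (u k - w k) < d.

Lemma close_trans d e u v w : close d u v -> close e v w -> close (d + e) u w.
Proof.
intros Huv Hvw k Hk.
replace (u k - w k) with ((u k - v k) + (v k - w k)) by ring.
eapply Rle_lt_trans; [apply Rabs_triang|].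
specialize (Huv k Hk); specialize (Hvw k Hk). lra.
Qed.

Lemma shear_continuous p q z eta : p <> q -> (p < n)%nat -> (q < n)%nat -> 0 < eta ->
  exists d, 0 < d /\ forall u, close d u z -> close eta (shear p q u) (shear p q z).
Proof.
intros Hpq Hp Hq He.
destruct (continuity_pt_eps _ (z q) (oic_cont _ (oic_shear_fn p q) (z q)) (eta / 2))
  as [d1 [Hd1 Hc]]; [lra|].
exists (Rmin (eta / 2) d1). split; [apply Rmin_glb_lt; lra|].
intros u Hu k Hk.
assert (Hu' : forall l, (l < n)%nat -> Rabs (u l - z l) < eta / 2 /\ Rabs (u l - z l) < d1).
{ intros l Hl. specialize (Hu l Hl).
  split; eapply Rlt_le_trans; eauto; [apply Rmin_l | apply Rmin_r]. }
destruct (Nat.eq_dec k p) as [->|Hkp].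
- rewrite !shear_at.
  destruct (Hu' p Hp) as [A _]. specialize (Hc _ (proj2 (Hu' q Hq))).
  replace (u p + shear_fn p q (u q) - (z p + shear_fn p q (z q)))
    with ((u p - z p) + (shear_fn p q (u q) - shear_fn p q (z q))) by ring.
  eapply Rle_lt_trans; [apply Rabs_triang | lra].
- rewrite !shear_other by exact Hkp. destruct (Hu' k Hk). lra.
Qed.

Lemma MS_continuous m : MS m -> forall z eta, 0 < eta ->
  exists d, 0 < d /\ forall u, close d u z -> close eta (m u) (m z).
Proof.
intros Hm. induction Hm as [|g m Hg Hm IH]; intros z eta He.
- exists eta. split; auto.
- destruct (M_gen_is_shear g Hg) as [p [q [Hpq [Hp [Hq ->]]]]].
  destruct (shear_continuous p q (m z) eta Hpq Hp Hq He) as [d1 [Hd1 H1]].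
  destruct (IH z d1 Hd1) as [d [Hd H2]].
  exists d. split; auto.
Qed.

Definition small (d a : R) : Prop := Rabs a < d /\ Rabs (sg a) < d /\ Rabs (si a) < d.

Lemma small_shear_fn d a p q : small d a -> Rabs (shear_fn p q a) < d.
Proof. intros [_ [Hg Hi]]. unfold shear_fn. destruct (Nat.ltb p q); assumption. Qed.

Lemma small_near_zero d : 0 < d -> exists e, 0 < e /\ forall a, Rabs a < e -> small d a.
Proof.
intros Hd. exists (Rmin d (Rmin (si d) (sg d))).
pose proof (Rmin_l d (Rmin (si d) (sg d))) as H1.
pose proof (Rmin_r d (Rmin (si d) (sg d))) as H2.
pose proof (Rmin_l (si d) (sg d)) as H3. pose proof (Rmin_r (si d) (sg d)) as H4.
split.
- apply Rmin_glb_lt; [exact Hd | apply Rmin_glb_lt; apply oic_pos; auto using oic_si, oic_sg].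
- intros a Ha. repeat split.
  + lra.
  + rewrite (oic_Rabs _ oic_sg), <- (sg_si d). apply (oic_lt _ oic_sg). lra.
  + rewrite (oic_Rabs _ oic_si), <- (si_sg d). apply (oic_lt _ oic_si). lra.
Qed.

Lemma approach_one_sided s l t w : l <> t -> (l < n)%nat -> (t < n)%nat -> s t <> 0 ->
  0 <= (w - s l) * s t ->
  exists s', reach s s' /\ Rabs (s' l - w) < Rabs (shear_fn l t (s t)) /\
    forall k, k <> l -> s' k = s k.
Proof.
intros Hlt Hl Ht Hst Hw.
set (f := shear_fn l t (s t)).
assert (Hfs : 0 < f * s t) by apply (oic_mul_pos _ (oic_shear_fn l t) _ Hst).
assert (Hf : f <> 0) by (intro E; rewrite E in Hfs; lra).
set (r := (w - s l) / f).
assert (Hr : 0 <= r).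
{ unfold r. replace ((w - s l) / f) with ((w - s l) * s t * / (f * s t)) by (field; auto).
  apply Rmult_le_pos; [exact Hw | left; apply Rinv_0_lt_compat, Hfs]. }
destruct (nat_floor r Hr) as [N HN].
exists (shear_iter l t N s). split; [apply reach_shear_iter; auto|]. split.
- rewrite shear_iter_at by exact Hlt. fold f.
  replace (s l + INR N * f - w) with ((INR N - r) * f) by (unfold r; field; auto).
  rewrite Rabs_mult, (Rabs_left1 (INR N - r)) by lra.
  pose proof (Rabs_pos_lt f Hf). nra.
- intros k Hk. apply shear_iter_other, Hk.
Qed.

Lemma approach_two_sided s l t u w d : l <> t -> l <> u ->
  (l < n)%nat -> (t < n)%nat -> (u < n)%nat ->
  s t * s u < 0 -> small d (s t) -> small d (s u) ->
  exists s', reach s s' /\ Rabs (s' l - w) < d /\ forall k, k <> l -> s' k = s k.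
Proof.
intros Hlt Hlu Hl Ht Hu Htu Hdt Hdu.
assert (Ht0 : s t <> 0) by (intro E; rewrite E in Htu; lra).
assert (Hu0 : s u <> 0) by (intro E; rewrite E in Htu; lra).
destruct (Rle_or_lt 0 ((w - s l) * s t)) as [Hwt|Hwt].
- destruct (approach_one_sided s l t w) as [s' [R1 [B1 E1]]]; auto.
  pose proof (small_shear_fn _ _ l t Hdt).
  exists s'. split; [exact R1 | split; [lra | exact E1]].
- destruct (approach_one_sided s l u w) as [s' [R1 [B1 E1]]]; auto.
  + assert (0 < s t * s t) by nra. nra.
  + pose proof (small_shear_fn _ _ l u Hdu).
    exists s'. split; [exact R1 | split; [lra | exact E1]].
Qed.

Section Euclid.
Variables (x : nat -> R) (i j : nat).
Hypothesis Hij : (i < j < n)%nat.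
Hypothesis Hirr : sigma_irrational sg si (x i, x j).

(* The element [g] of [M^-] carries the current pair back to [(x i, x j)];
   this is how irrationality forbids [s i = 0] after an [h] step. *)
Definition euclid_state (s : nat -> R) : Prop :=
  reach x s /\ s i * s j < 0 /\
  exists g, Mminus sg si g /\ g (s i, s j) = (x i, x j).

Lemma euclid_step_h s : euclid_state s -> si (Rabs (s j)) <= Rabs (s i) ->
  euclid_state (shear i j s) /\
  Rabs (shear i j s i) = Rabs (s i) - si (Rabs (s j)) /\ shear i j s j = s j.
Proof.
intros [Rs [Hneg [g [Hg Hgx]]]] Hle.
assert (Ei : shear i j s i = s i + si (s j)).
{ rewrite shear_at. unfold shear_fn. destruct (Nat.ltb_spec i j); [reflexivity | lia]. }
assert (Ej : shear i j s j = s j) by (apply shear_other; lia).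
rewrite Ei, Ej.
set (g' := fun p => g (h2inv si p)).
assert (Hg' : Mminus sg si g').
{ exact (gen_monoid_comp _ _ g (gm_comp _ (h2inv si) _ (or_introl eq_refl) (gm_id _)) Hg). }
assert (Hg'x : g' (s i + si (s j), s j) = (x i, x j)).
{ unfold g', h2inv; simpl. replace (s i + si (s j) - si (s j)) with (s i) by ring. exact Hgx. }
assert (Hnz : s i + si (s j) <> 0).
{ intro E. apply Hirr. exists (image2 g' Oy). split.
  - right; right; right. exists g'; split; auto.
  - exists (s i + si (s j), s j). split; [exact E | exact Hg'x]. }
assert (Hj0 : s j <> 0) by (intro E; rewrite E in Hneg; lra).
destruct (Rabs_add_opp_sign (s i) (s j) (si (s j))) as [Habs Hsign].
- exact Hneg.
- left. apply (oic_mul_pos _ oic_si _ Hj0).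
- rewrite (oic_Rabs _ oic_si). exact Hle.
- rewrite (oic_Rabs _ oic_si) in Habs. split; [|split; auto].
  split; [apply (reach_trans _ _ _ Rs), reach_shear; lia|].
  rewrite Ei, Ej. split; [|exists g'; auto].
  assert ((s i + si (s j)) * s j <> 0) by (apply Rmult_integral_contrapositive; auto).
  lra.
Qed.

Lemma euclid_step_v s : euclid_state s -> sg (Rabs (s i)) < Rabs (s j) ->
  euclid_state (shear j i s) /\
  Rabs (shear j i s j) = Rabs (s j) - sg (Rabs (s i)) /\ shear j i s i = s i.
Proof.
intros [Rs [Hneg [g [Hg Hgx]]]] Hlt.
assert (Ej : shear j i s j = s j + sg (s i)).
{ rewrite shear_at. unfold shear_fn. destruct (Nat.ltb_spec j i); [lia | reflexivity]. }
assert (Ei : shear j i s i = s i) by (apply shear_other; lia).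
rewrite Ei, Ej.
set (g' := fun p => g (v2inv sg p)).
assert (Hg' : Mminus sg si g').
{ exact (gen_monoid_comp _ _ g (gm_comp _ (v2inv sg) _ (or_intror eq_refl) (gm_id _)) Hg). }
assert (Hg'x : g' (s i, s j + sg (s i)) = (x i, x j)).
{ unfold g', v2inv; simpl. replace (s j + sg (s i) - sg (s i)) with (s j) by ring. exact Hgx. }
assert (Hi0 : s i <> 0) by (intro E; rewrite E in Hneg; lra).
destruct (Rabs_add_opp_sign (s j) (s i) (sg (s i))) as [Habs Hsign].
- lra.
- left. apply (oic_mul_pos _ oic_sg _ Hi0).
- rewrite (oic_Rabs _ oic_sg). lra.
- rewrite (oic_Rabs _ oic_sg) in Habs. split; [|split; auto].
  split; [apply (reach_trans _ _ _ Rs), reach_shear; lia|].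
  rewrite Ei, Ej. split; [|exists g'; auto].
  assert (s j + sg (s i) <> 0) by (intro E; rewrite E, Rabs_R0 in Habs; lra).
  assert ((s j + sg (s i)) * s i <> 0) by (apply Rmult_integral_contrapositive; auto).
  lra.
Qed.

Lemma euclid_one_small s d : 0 < d -> euclid_state s ->
  exists s', euclid_state s' /\ (Rabs (s' i) < d \/ Rabs (s' j) < d).
Proof.
intros Hd Hs0.
apply (descent _ _ (fun s => Rabs (s i) + Rabs (s j)) (Rmin (si d) (sg d))) with (s := s).
- apply Rmin_glb_lt; apply oic_pos; auto using oic_si, oic_sg.
- intros s' _. pose proof (Rabs_pos (s' i)). pose proof (Rabs_pos (s' j)). lra.
- intros s' Hs' Hbig.
  assert (Hi : d <= Rabs (s' i)) by (apply Rnot_lt_le; tauto).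
  assert (Hj : d <= Rabs (s' j)) by (apply Rnot_lt_le; tauto).
  pose proof (Rmin_l (si d) (sg d)). pose proof (Rmin_r (si d) (sg d)).
  destruct (Rle_or_lt (si (Rabs (s' j))) (Rabs (s' i))) as [Hh|Hv].
  + destruct (euclid_step_h s' Hs' Hh) as [Hst [E1 E2]].
    exists (shear i j s'). split; [exact Hst|]. rewrite E1, E2.
    assert (si d <= si (Rabs (s' j))) by (apply (oic_le _ oic_si); exact Hj). lra.
  + assert (Hv' : sg (Rabs (s' i)) < Rabs (s' j)).
    { rewrite <- (sg_si (Rabs (s' j))). apply (oic_lt _ oic_sg), Hv. }
    destruct (euclid_step_v s' Hs' Hv') as [Hst [E1 E2]].
    exists (shear j i s'). split; [exact Hst|]. rewrite E1, E2.
    assert (sg d <= sg (Rabs (s' i))) by (apply (oic_le _ oic_sg); exact Hi). lra.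
- exact Hs0.
Qed.

Lemma euclid_shrink_j s : euclid_state s ->
  exists s', euclid_state s' /\ s' i = s i /\ Rabs (s' j) <= sg (Rabs (s i)).
Proof.
intros Hs0.
assert (Hc : 0 < sg (Rabs (s i))).
{ apply (oic_pos _ oic_sg), Rabs_pos_lt. intro E.
  destruct Hs0 as [_ [Hneg _]]. rewrite E in Hneg. lra. }
destruct (descent (fun s' => euclid_state s' /\ s' i = s i)
  (fun s' => Rabs (s' j) <= sg (Rabs (s i))) (fun s' => Rabs (s' j)) _ Hc) with (s := s)
  as [s' [[Hs' Ei] Hq]].
- intros; apply Rabs_pos.
- intros s' [Hs' Ei] Hbig. apply Rnot_le_lt in Hbig. rewrite <- Ei in Hbig.
  destruct (euclid_step_v s' Hs' Hbig) as [Hst [E1 E2]].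
  exists (shear j i s'). rewrite E1, E2. split; [split; assumption | rewrite Ei; lra].
- split; [exact Hs0 | reflexivity].
- exists s'. auto.
Qed.

Lemma euclid_shrink_i s : euclid_state s ->
  exists s', euclid_state s' /\ s' j = s j /\ Rabs (s' i) < si (Rabs (s j)).
Proof.
intros Hs0.
assert (Hc : 0 < si (Rabs (s j))).
{ apply (oic_pos _ oic_si), Rabs_pos_lt. intro E.
  destruct Hs0 as [_ [Hneg _]]. rewrite E in Hneg. lra. }
destruct (descent (fun s' => euclid_state s' /\ s' j = s j)
  (fun s' => Rabs (s' i) < si (Rabs (s j))) (fun s' => Rabs (s' i)) _ Hc) with (s := s)
  as [s' [[Hs' Ej] Hq]].
- intros; apply Rabs_pos.
- intros s' [Hs' Ej] Hbig. apply Rnot_lt_le in Hbig. rewrite <- Ej in Hbig.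
  destruct (euclid_step_h s' Hs' Hbig) as [Hst [E1 E2]].
  exists (shear i j s'). rewrite E1, E2. split; [split; assumption | rewrite Ej; lra].
- split; [exact Hs0 | reflexivity].
- exists s'. auto.
Qed.

Lemma euclid_small_pair tau : 0 < tau -> x i * x j < 0 ->
  exists s, reach x s /\ s i * s j < 0 /\ Rabs (s i) < tau /\ Rabs (s j) < tau.
Proof.
intros Htau Hx.
assert (Hx0 : euclid_state x).
{ split; [apply reach_refl|]. split; [exact Hx|].
  exists (fun p => p). split; [constructor | reflexivity]. }
destruct (small_near_zero tau Htau) as [e [He Hsmall]].
destruct (euclid_one_small x e He Hx0) as [s1 [Hs1 [Hi1|Hj1]]].
- destruct (euclid_shrink_j s1 Hs1) as [s2 [[R2 [Hneg _]] [Ei Hj]]].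
  destruct (Hsmall _ Hi1) as [Hi [Hg _]].
  rewrite (oic_Rabs _ oic_sg) in Hg.
  exists s2. repeat split; [exact R2 | exact Hneg | rewrite Ei; lra | lra].
- destruct (euclid_shrink_i s1 Hs1) as [s2 [[R2 [Hneg _]] [Ej Hi]]].
  destruct (Hsmall _ Hj1) as [Hj [_ Hs1j]].
  rewrite (oic_Rabs _ oic_si) in Hs1j.
  exists s2. repeat split; [exact R2 | exact Hneg | lra | rewrite Ej; lra].
Qed.

End Euclid.

Lemma approach_off_pair s t u w d : t <> u -> (t < n)%nat -> (u < n)%nat ->
  s t * s u < 0 -> small d (s t) -> small d (s u) ->
  exists s', reach s s' /\ s' t = s t /\ s' u = s u /\
    forall l, (l < n)%nat -> l <> t -> l <> u -> Rabs (s' l - w l) < d.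
Proof.
intros Htu Ht Hu Hneg Hdt Hdu.
assert (Hfill : forall N, exists s', reach s s' /\ s' t = s t /\ s' u = s u /\
  forall l, (l < N)%nat -> (l < n)%nat -> l <> t -> l <> u -> Rabs (s' l - w l) < d).
{ induction N as [|N [s1 [R1 [Et [Eu H1]]]]].
  - exists s. repeat split; [apply reach_refl | intros; lia].
  - destruct (classic ((N < n)%nat /\ N <> t /\ N <> u)) as [[HN [HNt HNu]]|HN].
    + destruct (approach_two_sided s1 N t u (w N) d) as [s2 [R2 [B2 E2]]];
        try rewrite Et; try rewrite Eu; auto.
      exists s2. rewrite (E2 t), (E2 u) by auto.
      repeat split; [eapply reach_trans; eauto | auto | auto |].
      intros l Hl Hln Hlt Hlu. destruct (Nat.eq_dec l N) as [->|HlN]; [exact B2|].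
      rewrite E2 by exact HlN. apply H1; auto. lia.
    + exists s1. repeat split; auto.
      intros l Hl Hln Hlt Hlu. destruct (Nat.eq_dec l N) as [->|HlN]; [tauto|].
      apply H1; auto. lia. }
destruct (Hfill n) as [s' [R' [Et [Eu H']]]].
exists s'. repeat split; auto.
Qed.

(* The tool [t] moves coordinates only in the direction of [s t], so the
   third coordinate [k] is first pushed far enough that [k] and, after one
   [shear u k], also [u] lie behind their targets; [t] then brings both back. *)
Lemma approach_from_small_pair s t u k w d : t <> u -> k <> t -> k <> u ->
  (t < n)%nat -> (u < n)%nat -> (k < n)%nat ->
  s t * s u < 0 -> small d (s t) -> small d (s u) -> w t = 0 ->
  exists z, reach s z /\ close d z w.
Proof.
intros Htu Hkt Hku Ht Hu Hk Hneg Hdt Hdu Hwt.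
destruct (approach_off_pair s t u w d) as [s1 [R1 [E1t [E1u H1]]]]; auto.
assert (Ht0 : s t <> 0) by (intro E; rewrite E in Hneg; lra).
destruct (far_point (w k) (shear_fn k u (w u - s u)) (s t) d Ht0) as [c Hc].
destruct (approach_two_sided s1 k t u c d) as [s2 [R2 [B2 E2]]];
  try rewrite E1t; try rewrite E1u; auto.
destruct (Hc (s2 k) B2) as [Hk2 Hu2].
set (s3 := shear u k s2).
assert (E3 : forall l, l <> u -> s3 l = s2 l) by (intros; apply shear_other; auto).
assert (E3t : s3 t = s t) by (rewrite E3, E2, E1t; auto).
assert (Hu3 : 0 <= (w u - s3 u) * s t).
{ unfold s3. rewrite shear_at, E2, E1u by auto.
  replace (w u - (s u + shear_fn u k (s2 k)))
    with (shear_fn u k (shear_fn k u (w u - s u)) - shear_fn u k (s2 k))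
    by (rewrite shear_fn_inv by auto; ring).
  apply (oic_mul_sign _ (oic_shear_fn u k)), Hu2. }
destruct (approach_one_sided s3 u t (w u)) as [s4 [R4 [B4 E4]]];
  try rewrite E3t; auto.
assert (E4t : s4 t = s t) by (rewrite E4; auto).
assert (E4k : s4 k = s2 k) by (rewrite E4, E3; auto).
destruct (approach_one_sided s4 k t (w k)) as [s5 [R5 [B5 E5]]];
  try rewrite E4t; try rewrite E4k; auto.
exists s5. split.
{ apply (reach_trans _ _ _ R1), (reach_trans _ _ _ R2), (reach_trans _ s3); [apply reach_shear; auto|].
  apply (reach_trans _ _ _ R4), R5. }
intros l Hl.
destruct (Nat.eq_dec l k) as [->|Hlk].
{ rewrite E4t in B5. eapply Rlt_trans; [exact B5 | apply small_shear_fn, Hdt]. }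
rewrite E5 by exact Hlk.
destruct (Nat.eq_dec l u) as [->|Hlu].
{ rewrite E3t in B4. eapply Rlt_trans; [exact B4 | apply small_shear_fn, Hdt]. }
rewrite E4, E3, E2 by auto.
destruct (Nat.eq_dec l t) as [->|Hlt].
- rewrite E1t, Hwt, Rminus_0_r. apply Hdt.
- apply H1; auto.
Qed.

Lemma approx_from_hyperplane_opp y a b c eps : a <> b -> a <> c -> b <> c ->
  (a < n)%nat -> (b < n)%nat -> (c < n)%nat -> y b * y c < 0 -> 0 < eps ->
  exists W z, MS W /\ z a = 0 /\ close eps (W z) y.
Proof.
intros Hab Hac Hbc Ha Hb Hc Hneg He.
set (al := shear_fn a b (y b)). set (f := shear_fn a c (y c)).
assert (Hal : 0 < al * y b)
  by (apply (oic_mul_pos _ (oic_shear_fn a b)); intro E; rewrite E in Hneg; lra).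
assert (Hf : 0 < f * y c)
  by (apply (oic_mul_pos _ (oic_shear_fn a c)); intro E; rewrite E in Hneg; lra).
assert (Half : al * f < 0) by nra.
destruct (continuity_pt_eps _ al (oic_cont _ (oic_shear_fn b a) al) eps He) as [dl [Hdl Hcont]].
destruct (nat_combination_near al f (y a) dl Half Hdl) as [m [r [v [Hv Hsum]]]].
set (z := fun l => if Nat.eqb l a then 0 else if Nat.eqb l b then shear_fn b a v else y l).
assert (Za : z a = 0) by (unfold z; rewrite Nat.eqb_refl; reflexivity).
assert (Zb : z b = shear_fn b a v)
  by (unfold z; rewrite (proj2 (Nat.eqb_neq b a)), Nat.eqb_refl by auto; reflexivity).
assert (Zl : forall l, l <> a -> l <> b -> z l = y l).
{ intros l Hla Hlb. unfold z. rewrite (proj2 (Nat.eqb_neq l a)), (proj2 (Nat.eqb_neq l b)) by auto.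
  reflexivity. }
exists (fun s => shear_iter a c r (shear_iter a b m s)), z.
split; [apply gen_monoid_comp; apply MS_shear_iter; auto|]. split; [exact Za|].
intros l Hl. destruct (Nat.eq_dec l a) as [->|Hla].
- rewrite !shear_iter_at, shear_iter_other, Za, Zb, Zl, shear_fn_inv by auto. fold f.
  replace (0 + INR m * v + INR r * f - y a) with 0 by lra.
  rewrite Rabs_R0. exact He.
- rewrite !shear_iter_other by exact Hla.
  destruct (Nat.eq_dec l b) as [->|Hlb].
  + rewrite Zb, <- (shear_fn_inv b a (y b)) by auto. apply Hcont, Hv.
  + rewrite Zl, Rminus_diag, Rabs_R0 by auto. exact He.
Qed.

(* If [y j <> 0], undo [r] steps of [shear k j] on [y] so that [y k] gets
   the sign opposite to [y j], and apply the previous lemma with [a = i]. *)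
Lemma approx_from_hyperplane y i j k eps : i <> j -> k <> i -> k <> j ->
  (i < n)%nat -> (j < n)%nat -> (k < n)%nat -> 0 < eps ->
  exists t, (t = i \/ t = j) /\ exists W z, MS W /\ z t = 0 /\ close eps (W z) y.
Proof.
intros Hij Hki Hkj Hi Hj Hk He.
destruct (Req_dec (y j) 0) as [Hy0|Hy0].
{ exists j. split; [now right|]. exists (fun s => s), y.
  split; [constructor|]. split; [exact Hy0|].
  intros l Hl. rewrite Rminus_diag, Rabs_R0. exact He. }
set (f := shear_fn k j (y j)).
assert (Hfy : 0 < f * y j) by apply (oic_mul_pos _ (oic_shear_fn k j) _ Hy0).
assert (Hf : 0 < Rabs f) by (apply Rabs_pos_lt; intro E; rewrite E in Hfy; lra).
destruct (nat_mul_unbounded (Rabs (y k)) (Rabs f) Hf) as [r Hr].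
set (y' := fun l => if Nat.eqb l k then y k - INR r * f else y l).
assert (Hy'k : y' k = y k - INR r * f) by (unfold y'; rewrite Nat.eqb_refl; reflexivity).
assert (Hy'l : forall l, l <> k -> y' l = y l)
  by (intros l Hl; unfold y'; rewrite (proj2 (Nat.eqb_neq l k)) by exact Hl; reflexivity).
assert (Hneg : y' j * y' k < 0).
{ rewrite Hy'k, Hy'l by auto.
  assert (Hfj : f * y j = Rabs f * Rabs (y j)) by (rewrite <- Rabs_mult, Rabs_right; lra).
  assert (y k * y j <= Rabs (y k) * Rabs (y j)) by (rewrite <- Rabs_mult; apply Rle_abs).
  assert (Rabs (y k) * Rabs (y j) < INR r * Rabs f * Rabs (y j))
    by (apply Rmult_lt_compat_r; [apply Rabs_pos_lt, Hy0 | exact Hr]).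
  replace (y j * (y k - INR r * f)) with (y k * y j - INR r * (f * y j)) by ring.
  rewrite Hfj. lra. }
assert (Hback : forall l, shear_iter k j r y' l = y l).
{ intros l. destruct (Nat.eq_dec l k) as [->|Hlk].
  - rewrite shear_iter_at, Hy'k, Hy'l by auto. fold f. ring.
  - rewrite shear_iter_other by exact Hlk. apply Hy'l, Hlk. }
destruct (MS_continuous _ (MS_shear_iter k j r Hkj Hk Hj) y' eps He) as [d [Hd Hcont]].
destruct (approx_from_hyperplane_opp y' i j k d) as [W [z [HW [Hz Hcl]]]]; auto.
exists i. split; [now left|].
exists (fun s => shear_iter k j r (W s)), z. split; [|split; [exact Hz|]].
- apply gen_monoid_comp; [exact HW | apply MS_shear_iter; auto].
- intros l Hl. rewrite <- (Hback l). apply Hcont; auto.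
Qed.

End Orbit.

Lemma third_index n i j : (3 <= n)%nat -> exists k, (k < n)%nat /\ k <> i /\ k <> j.
Proof.
intros Hn.
destruct (Nat.eq_dec i 0), (Nat.eq_dec j 0), (Nat.eq_dec i 1), (Nat.eq_dec j 1);
  first [exists 0%nat; lia | exists 1%nat; lia | exists 2%nat; lia].
Qed.

Theorem theorem5 (n : nat) (sigma sigma_inv : R -> R) (x : nat -> R) :
  (3 <= n)%nat ->
  incr_odd_homeo sigma sigma_inv ->
  (exists i j, (i < j < n)%nat /\ x i * x j < 0 /\
     sigma_irrational sigma sigma_inv (x i, x j)) ->
  orbit_dense sigma sigma_inv n x.
Proof.
intros Hn Hs [i [j [Hij [Hneg Hirr]]]] y eps Heps.
destruct (third_index n i j Hn) as [k [Hk [Hki Hkj]]].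
destruct (approx_from_hyperplane sigma sigma_inv n Hs y i j k (eps / 2))
  as [t [Ht [W [z [HW [Hzt Hyz]]]]]]; try lia; try lra.
destruct (MS_continuous sigma sigma_inv n Hs W HW z (eps / 2)) as [d [Hd Hcont]]; [lra|].
destruct (small_near_zero sigma sigma_inv Hs d Hd) as [e [He Hsmall]].
destruct (euclid_small_pair sigma sigma_inv n Hs x i j Hij Hirr e He Hneg)
  as [s [Rs [Hs_neg [Hsi Hsj]]]].
assert (Hz' : exists z', reach sigma sigma_inv n s z' /\ close n d z' z).
{ destruct Ht as [-> | ->].
  - apply (approach_from_small_pair sigma sigma_inv n Hs s i j k); auto; lia.
  - apply (approach_from_small_pair sigma sigma_inv n Hs s j i k); auto; try lia; lra. }
destruct Hz' as [z' [Rz Hz']].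
destruct (reach_trans sigma sigma_inv n _ _ _ Rs (reach_trans sigma sigma_inv n _ _ _ Rz
  (reach_MS sigma sigma_inv n W z' HW))) as [m [Hm Em]].
exists m. split; [exact Hm|]. rewrite Em.
replace eps with (eps / 2 + eps / 2) by field.
exact (close_trans n _ _ _ (W z) _ (Hcont z' Hz') Hyz).
Qed.
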